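(* Let $\|\cdot\|$ be an arbitrary norm on $\mathbb{R}^d$ and let $A$ be an expanding real $d\times d$ matrix such that $\|\gamma\|\le\|A\gamma\|$ for all $\gamma\in\mathbb{R}^d$. Let $r:[0,\infty)\to\mathbb{R}$ be a continuous decreasing function with $r(0)=1$ and $r(s)\to0$ as $s\to\infty$. Put $\varphi(\gamma):=r(\|\gamma\|)$ and $g(\gamma):=\varphi(\gamma)-\varphi(A\gamma)$ for $\gamma\in\mathbb{R}^d$. Then: (i) $g(\gamma)\ge 0$ for all $\gamma\in\mathbb{R}^d$; (ii) $\sum_{j\in\mathbb{Z}} g(A^j\gamma)=1$ for all $\gamma\in\mathbb{R}^d\setminus\{0\}$; (iii) there exists a constant $C>0$ such that $$C\le\sum_{j\in\mathbb{Z}}|g(A^j\gamma)|^2\le 1\quad\text{for all }\gamma\in\mathbb{R}^d\setminus\{0\}.$$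
   Context: A real $d\times d$ matrix is called expanding if all of its eigenvalues have absolute value strictly greater than one. *)

From HB Require Import structures.
From mathcomp Require Import all_boot all_order all_algebra.
From mathcomp Require Import complex.
From mathcomp Require Import all_classical all_reals all_analysis.
Set Implicit Arguments. Unset Strict Implicit. Unset Printing Implicit Defensive.
Import Order.TTheory GRing.Theory Num.Theory.
Import numFieldNormedType.Exports.
Local Open Scope classical_set_scope.
Local Open Scope ring_scope.

Definition is_norm (R : realType) (d : nat) (N : 'cV[R]_d -> R) : Prop :=
  [/\ forall x, 0 <= N x,
      forall x, N x = 0 -> x = 0,
      forall (a : R) x, N (a *: x) = `|a| * N x
    & forall x y, N (x + y) <= N x + N y].

Definition expanding (R : realType) (d : nat) (A : 'M[R]_d) : Prop :=
  forall z : complex (R : rcfType),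
    eigenvalue (map_mx (real_complex (R : rcfType)) A) z ->
    1 < ComplexField.Normc.normc z.

Definition mxpowz (R : realType) (d : nat) (A : 'M[R]_d) (j : int) : 'M[R]_d :=
  match j with
  | Posz n => A ^+ n
  | Negz n => (invmx A) ^+ n.+1
  end.

(* Bi-infinite sum over Z: sum_{j in Z} a j = l means both one-sided series
   sum_{n >= 0} a n and sum_{n >= 1} a (-n) converge, with sum of limits l. *)
Definition zsum_to (R : realType) (a : int -> R) (l : R) : Prop :=
  exists l1 l2 : R,
    [/\ series (fun n : nat => a (Posz n)) @ \oo --> l1,
        series (fun n : nat => a (Negz n)) @ \oo --> l2
      & l1 + l2 = l].

(* All eigenvalues of A^-1 lie in the open unit disc, so (Cayley-Hamilton over
   the complex numbers) the powers A^-k tend to 0, and by equivalence of norms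
   N (A^-k x) <= eta * N x uniformly in x once k is large.  Hence for x <> 0,
   N (A^k x) -> +oo and N (A^-k x) -> 0, and the partial sums of g (A^j x)
   telescope to r (N (A^-m x)) - r (N (A^m x)) -> 1 - 0.  For the lower bound
   choose s1 with r > 3/4 on [0, s1] and s0 with r < 1/4 on [s0, +oo[; the
   uniform contraction gives an L such that L steps after the last j with
   N (A^j x) <= s1 the norm exceeds s0, so these L gaps sum to more than 1/2 and
   one of them is at least 1/(2L).  The upper bound holds as 0 <= g <= 1. *)

From HB Require Import structures.
From mathcomp Require Import all_boot all_order all_algebra.
From mathcomp Require Import complex.
From mathcomp Require Import all_classical all_reals all_analysis.
From mathcomp Require Import ring lra.
Set Implicit Arguments. Unset Strict Implicit. Unset Printing Implicit Defensive.
Import Order.TTheory GRing.Theory Num.Theory.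
Import numFieldNormedType.Exports.
Local Open Scope classical_set_scope.
Local Open Scope ring_scope.

Section PerturbedContraction.
Variable R : realType.
Variables (a b : R^nat) (q : R).
Hypotheses (q_ge0 : 0 <= q) (q_lt1 : q < 1).
Hypothesis a_rec : forall k, a k.+1 <= q * a k + b k.

Lemma perturbed_contraction_le c m :
  0 <= c -> (forall k, (m <= k)%N -> b k <= c) ->
  forall k, a (m + k)%N <= q ^+ k * a m + c / (1 - q).
Proof.
move=> c0 bc; have q1 : 0 < 1 - q by rewrite subr_gt0.
elim=> [|k IHk]; first by rewrite addn0 expr0 mul1r lerDl; apply/divr_ge0/ltW.
have c_fix : q * (c / (1 - q)) + c = c / (1 - q) by field; rewrite gt_eqF.
rewrite addnS exprS -mulrA.
have := ler_wpM2l q_ge0 IHk; have := bc _ (leq_addr k m); have := a_rec (m + k).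
rewrite mulrDr; lra.
Qed.

Lemma perturbed_contraction_cvg0 :
  (forall k, 0 <= a k) -> b @ \oo --> 0 -> a @ \oo --> 0.
Proof.
move=> a_ge0 b0; apply/cvgr0Pnorm_lt => e e0.
have q1 : 0 < 1 - q by rewrite subr_gt0.
have c0 : 0 < e * (1 - q) / 2 by rewrite divr_gt0 ?mulr_gt0.
move/cvgr0Pnorm_lt: b0 => /(_ _ c0) [m _ bc].
have : (fun k => q ^+ k * a m) @ \oo --> 0.
  rewrite -(mul0r (a m)); apply: cvgMr_tmp.
  by apply: cvg_expr; rewrite (ger0_norm q_ge0).
move/cvgr0Pnorm_lt => /(_ (e / 2)) [|K _ qK]; first by rewrite divr_gt0.
exists (m + K)%N => // n /= mKn.
have mn : (m <= n)%N := leq_trans (leq_addr K m) mKn.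
have /qK /= /(le_lt_trans (ler_norm _)) : (K <= n - m)%N by rewrite leq_subRL.
have := perturbed_contraction_le (ltW c0)
  (fun k mk => ltW (le_lt_trans (ler_norm _) (bc k mk))) (n - m).
rewrite subnKC // ger0_norm ?a_ge0 //.
have -> : e * (1 - q) / 2 / (1 - q) = e / 2 by field; rewrite gt_eqF.
lra.
Qed.

End PerturbedContraction.

Lemma sum_ord_gt_exists (R : realDomainType) L (a : 'I_L -> R) c :
  c *+ L < \sum_(i < L) a i -> exists i, c < a i.
Proof.
case: (boolP [exists i, c < a i]) => [/existsP //|/existsPn a_le].
rewrite ltNge -[X in _ *+ X](card_ord L) -sumr_const ler_sum // => i _.
by rewrite leNgt a_le.
Qed.

Lemma int_crossing (P : pred int) i j : i <= j -> P i -> ~~ P j ->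
  exists k, P k && ~~ P (k + 1).
Proof.
rewrite -subr_ge0 => /gez0_abs; set m := `|j - i|%N => ij Pi.
rewrite -(subrK i j) addrC -ij {ij}; elim: m => [|m IHm]; first by rewrite addr0 Pi.
have [Pim nPim1|nPim _] := boolP (P (i + m%:Z)); last exact: IHm.
by exists (i + m%:Z); rewrite Pim -addrA -PoszD addn1.
Qed.

Section NonnegSeries.
Variables (R : realType) (u : R^nat) (l : R).
Hypotheses (u_ge0 : forall k, 0 <= u k) (u_cvg : series u @ \oo --> l).

Lemma nonneg_series_nondecreasing : nondecreasing_seq (series u).
Proof. by apply/nondecreasing_seqP => k; rewrite seriesSr lerDl. Qed.

Lemma nonneg_series_le_lim m : series u m <= l.
Proof.
apply: (cvgr_to_ge u_cvg); exists m => // k /= mk.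
exact: nonneg_series_nondecreasing.
Qed.

Lemma nonneg_series_lim_ge0 : 0 <= l.
Proof. by have := nonneg_series_le_lim 0; rewrite seriesEord /= big_ord0. Qed.

Lemma nonneg_series_term_le_lim k : u k <= l.
Proof.
rewrite (le_trans _ (nonneg_series_le_lim k.+1)) // seriesSr lerDr.
by rewrite seriesEord /= sumr_ge0.
Qed.

Lemma series_sqr_cvg_le : (forall k, u k <= 1) ->
  exists2 l', series (fun k => u k ^+ 2) @ \oo --> l' & l' <= l.
Proof.
move=> u_le1; set s := series _.
have s_le m : s m <= l.
  rewrite (le_trans _ (nonneg_series_le_lim m)) // /s !seriesEord /=.
  by apply: ler_sum => k _; rewrite expr2 ler_piMl.
have s_nd : nondecreasing_seq s.
  by apply/nondecreasing_seqP => k; rewrite /s seriesSr lerDl sqr_ge0.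
have s_cvg : cvgn s by apply: nondecreasing_is_cvgn => //; exists l => _ [m _ <-].
by exists (limn s) => //; apply: (cvgr_to_le s_cvg); apply: nearW.
Qed.

End NonnegSeries.

Section IntegerSums.
Variable R : realType.
Implicit Types (a : int -> R) (l : R).

Lemma zsum_to_term_le a l : (forall j, 0 <= a j) -> zsum_to a l -> forall j, a j <= l.
Proof.
move=> a_ge0 [l1 [l2 [al1 al2 <-]]] [k|k].
  apply: ler_wpDr; first exact: (nonneg_series_lim_ge0 (fun=> a_ge0 _) al2).
  exact: (nonneg_series_term_le_lim (fun=> a_ge0 _) al1).
apply: ler_wpDl; first exact: (nonneg_series_lim_ge0 (fun=> a_ge0 _) al1).
exact: (nonneg_series_term_le_lim (fun=> a_ge0 _) al2).
Qed.

Lemma zsum_to_sqr_le a l : (forall j, 0 <= a j <= 1) -> zsum_to a l ->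
  exists2 S, zsum_to (fun j => a j ^+ 2) S & S <= l.
Proof.
move=> a01 [l1 [l2 [al1 al2 <-]]].
have a_ge0 j : 0 <= a j by case/andP: (a01 j).
have a_le1 j : a j <= 1 by case/andP: (a01 j).
have [l1' al1' le1] := series_sqr_cvg_le (fun k => a_ge0 _) al1 (fun k => a_le1 _).
have [l2' al2' le2] := series_sqr_cvg_le (fun k => a_ge0 _) al2 (fun k => a_le1 _).
by exists (l1' + l2'); [exists l1', l2' | rewrite lerD].
Qed.

End IntegerSums.

Section MatrixNorm.
Variable R : realType.

Lemma mx_norm_le m p (M : 'M[R]_(m, p)) c :
  0 <= c -> (forall i j, `|M i j| <= c) -> `|M| <= c.
Proof.
by move=> c0 Mc; rewrite [leLHS]/Num.norm /= mx_normrE; apply: bigmax_le => // -[i j] _.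
Qed.

Lemma ler_entry_mx_norm m p (M : 'M[R]_(m, p)) i j : `|M i j| <= `|M|.
Proof.
by rewrite [leRHS]/Num.norm /= mx_normrE; apply/bigmax_geP; right; exists (i, j).
Qed.

Lemma mx_norm_trmx m p (M : 'M[R]_(m, p)) : `|M^T| = `|M|.
Proof.
have trmx_le p' m' (N : 'M[R]_(p', m')) : `|N^T| <= `|N|.
  by apply: mx_norm_le => // i j; rewrite mxE ler_entry_mx_norm.
by apply/le_anti/andP; split; last rewrite -{1}(trmxK M); apply: trmx_le.
Qed.

Lemma mx_norm_mulmx_le m p q (M : 'M[R]_(m, p)) (W : 'M[R]_(p, q)) :
  `|M *m W| <= p%:R * `|M| * `|W|.
Proof.
apply: mx_norm_le => [|i j]; first by rewrite !mulr_ge0.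
rewrite mxE (le_trans (ler_norm_sum _ _ _)) // -mulrA mulr_natl.
rewrite -[X in _ *+ X](card_ord p) -sumr_const; apply: ler_sum => k _.
by rewrite normrM ler_pM ?ler_entry_mx_norm.
Qed.

End MatrixNorm.

Section IsNorm.
Variables (R : realType) (d : nat) (N : 'cV[R]_d -> R).
Hypothesis N_norm : is_norm N.

Lemma is_norm_ge0 x : 0 <= N x.
Proof. by case: N_norm. Qed.

Lemma is_norm_eq0 x : N x = 0 -> x = 0.
Proof. by case: N_norm => _ N0 _ _; apply: N0. Qed.

Lemma is_normZ a x : N (a *: x) = `|a| * N x.
Proof. by case: N_norm. Qed.

Lemma is_normD x y : N (x + y) <= N x + N y.
Proof. by case: N_norm. Qed.

Lemma is_norm0 : N 0 = 0.
Proof. by rewrite -(scale0r 0) is_normZ normr0 mul0r. Qed.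

Lemma is_norm_gt0 x : x != 0 -> 0 < N x.
Proof.
by move=> x0; rewrite lt_def is_norm_ge0 andbT; apply: contra_neq x0 => /is_norm_eq0.
Qed.

Lemma is_norm_sum I (s : seq I) (P : pred I) F :
  N (\sum_(i <- s | P i) F i) <= \sum_(i <- s | P i) N (F i).
Proof.
elim/big_ind2: _ => [|x1 y1 x2 y2 le1 le2|//]; first by rewrite is_norm0.
by rewrite (le_trans (is_normD _ _)) ?lerD.
Qed.

Lemma is_norm_dist x y : `|N x - N y| <= N (x - y).
Proof.
have N_opp z : N (- z) = N z by rewrite -scaleN1r is_normZ normrN normr1 mul1r.
apply/ler_normlP; split.
  by have := is_normD (y - x) x; rewrite subrK -opprB N_opp; lra.
by have := is_normD (x - y) y; rewrite subrK; lra.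
Qed.

Lemma is_norm_le_mx_norm x : N x <= (\sum_i N (delta_mx i 0)) * `|x|.
Proof.
have {1}-> : x = \sum_i x i 0 *: delta_mx i 0.
  apply/matrixP => i j; rewrite summxE (bigD1 i) //= big1 ?addr0.
    by rewrite !mxE !eqxx (ord1 j) mulr1.
  by move=> k ki; rewrite !mxE eq_sym (negbTE ki) mulr0.
rewrite mulr_suml (le_trans (is_norm_sum _ _ _)) //; apply: ler_sum => i _.
by rewrite is_normZ mulrC ler_wpM2l ?is_norm_ge0 ?ler_entry_mx_norm.
Qed.

End IsNorm.

Section NormEquivalence.
Variables (R : realType) (n : nat) (N : 'cV[R]_n.+1 -> R).
Hypothesis N_norm : is_norm N.

Lemma is_norm_trmx_continuous : continuous (fun v : 'rV[R]_n.+1 => N v^T).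
Proof.
pose K := \sum_i N (delta_mx i 0 : 'cV[R]_n.+1) + 1.
have K_gt0 : 0 < K by rewrite ltr_pwDr // sumr_ge0 // => i _; apply: is_norm_ge0.
have N_lip v w : `|N v^T - N w^T| <= K * `|v - w|.
  rewrite (le_trans (is_norm_dist N_norm _ _)) // -linearB /=.
  rewrite (le_trans (is_norm_le_mx_norm N_norm _)) // mx_norm_trmx ler_wpM2r //.
  by rewrite lerDl.
move=> v; apply/(@cvgrPdist_lt _ _ _ (nbhs v) (nbhs_filter v)) => e e0; near=> w.
rewrite (le_lt_trans (N_lip v w)) // mulrC -ltr_pdivlMr //.
near: w; apply: (@cvgr_dist_lt _ _ _ (nbhs v) (nbhs_filter v) id) => //.
by rewrite divr_gt0.
Unshelve. all: by end_near.
Qed.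

Lemma mx_norm_le_is_norm : exists2 c, 0 < c & forall x, `|x| <= c * N x.
Proof.
pose S := [set v : 'rV[R]_n.+1 | `|v| = 1].
have S_compact : compact S.
  apply: bounded_closed_compact.
    by exists 1; split => // M M1 v /= ->; apply: ltW.
  apply: (preimage_closed (f := fun v : 'rV[R]_n.+1 => `|v|) (D := [set 1])).
    by move=> ? _; apply: norm_continuous.
  exact: closed_eq.
have S_ne : S !=set0.
  exists (const_mx 1); apply/le_anti/andP; split.
    by apply: mx_norm_le => // i j; rewrite mxE normr1.
  by have := ler_entry_mx_norm (const_mx 1 : 'rV[R]_n.+1) 0 0; rewrite mxE normr1.
have [v /set_mem Sv v_min] := compact_EVT_min S_ne S_compact
  (continuous_subspaceT is_norm_trmx_continuous).
have Nv_gt0 : 0 < N v^T.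
  by apply: (is_norm_gt0 N_norm); rewrite trmx_eq0 -normr_eq0 Sv oner_eq0.
exists (N v^T)^-1; first by rewrite invr_gt0.
move=> x; have [->|x0] := eqVneq x 0; first by rewrite normr0 is_norm0 // mulr0.
have x_gt0 : 0 < `|x| by rewrite normr_gt0.
have /v_min : `|x|^-1 *: x^T \in S.
  by rewrite inE /S /= normrZ mx_norm_trmx normfV normr_id mulVf ?gt_eqF.
rewrite linearZ /= trmxK is_normZ // normfV normr_id mulrC ler_pdivlMr // => Nv_le.
by rewrite mulrC ler_pdivlMr // mulrC.
Qed.

End NormEquivalence.

Section ComplexMatrixPowers.
Variable R : realType.
Local Notation C := (complex (R : rcfType)).
Local Notation normc := (@ComplexField.Normc.normc (R : rcfType)).

Lemma normc_ge0 (z : C) : 0 <= normc z.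
Proof. by case: z => a b; rewrite sqrtr_ge0. Qed.

Lemma normc_real (x : R) : normc x%:C%C = `|x|.
Proof. by rewrite /= expr0n addr0 sqrtr_sqr. Qed.

Definition mx_normc {p m} (Z : 'M[C]_(p, m)) : R := \sum_i \sum_j normc (Z i j).

Lemma mx_normc_ge0 p m (Z : 'M[C]_(p, m)) : 0 <= mx_normc Z.
Proof. by apply: sumr_ge0 => i _; apply: sumr_ge0 => j _; apply: normc_ge0. Qed.

Lemma mx_normc0 p m : mx_normc (0 : 'M[C]_(p, m)) = 0.
Proof.
by apply: big1 => i _; apply: big1 => j _; rewrite mxE ComplexField.Normc.normc0.
Qed.

Lemma mx_normcD p m (Z W : 'M[C]_(p, m)) :
  mx_normc (Z + W) <= mx_normc Z + mx_normc W.
Proof.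
rewrite /mx_normc -big_split; apply: ler_sum => i _.
by rewrite -big_split; apply: ler_sum => j _; rewrite mxE le_normcD.
Qed.

Lemma mx_normcZ p m (a : C) (Z : 'M[C]_(p, m)) :
  mx_normc (a *: Z) = normc a * mx_normc Z.
Proof.
rewrite /mx_normc mulr_sumr; apply: eq_bigr => i _; rewrite mulr_sumr.
by apply: eq_bigr => j _; rewrite mxE ComplexField.Normc.normcM.
Qed.

Lemma normc_le_mx_normc p m (Z : 'M[C]_(p, m)) i j : normc (Z i j) <= mx_normc Z.
Proof.
rewrite /mx_normc (bigD1 i) //= (bigD1 j) //= -addrA lerDl.
by rewrite addr_ge0 //; do ?[apply: sumr_ge0 => ? _]; apply: normc_ge0.
Qed.

Lemma mx_normc_exp_cvg0 n (M : 'M[C]_n.+1) m (Z : 'M[C]_(n.+1, m)) :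
  (forall z, eigenvalue M z -> normc z < 1) ->
  mx_normc (M ^+ k *m Z) @[k --> \oo] --> 0.
Proof.
move=> eigM; have [rs char_rs] := closed_field_poly_normal (char_poly M).
rewrite (monicP (char_poly_monic M)) scale1r in char_rs.
have rs_lt1 : all (fun z => normc z < 1) rs.
  apply/allP => z zrs; apply: eigM.
  by rewrite eigenvalue_root_char char_rs root_prod_XsubC.
have : horner_mx M (\prod_(z <- rs) ('X - z%:P)) *m Z = 0.
  by rewrite -char_rs Cayley_Hamilton mul0mx.
(* Peel off the roots one at a time: with W := (M - l) Z we have
   M^(k+1) Z = l M^k Z + M^k W, a contraction perturbed by a null sequence. *)
elim/last_ind: rs rs_lt1 {char_rs} Z => [_ Z|s l IHs].
  rewrite big_nil rmorph1 mul1mx => ->.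
  by under eq_fun do rewrite mulmx0 mx_normc0; apply: cvg_cst.
rewrite all_rcons => /andP[l_lt1 s_lt1] Z.
rewrite big_rcons rmorphM /= rmorphB /= horner_mx_X horner_mx_C -mulmxE -mulmxA.
set W := (M - l%:M) *m Z => /(IHs s_lt1) W0.
have MZ : M *m Z = l *: Z + W by rewrite /W mulmxBl mul_scalar_mx addrC subrK.
apply: (perturbed_contraction_cvg0 (normc_ge0 l) l_lt1 _ _ W0).
- move=> k; rewrite exprSr -mulmxE -mulmxA MZ mulmxDr -scalemxAr -mx_normcZ.
  exact: mx_normcD.
- by move=> k; apply: mx_normc_ge0.
Qed.

End ComplexMatrixPowers.

Lemma eigenvalue_invmx (F : fieldType) n (M : 'M[F]_n) z : M \in unitmx ->
  eigenvalue (invmx M) z -> eigenvalue M z^-1.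
Proof.
move=> Mu /eigenvalueP[v vMz v0]; apply/eigenvalueP; exists v => //.
have v_eq : v = z *: (v *m M) by rewrite scalemxAl -vMz -mulmxA mulVmx ?mulmx1.
have z0 : z != 0 by apply: contraNneq v0 => z0; rewrite v_eq z0 scale0r.
by rewrite {2}v_eq scalerA mulVf ?scale1r.
Qed.

Section ExpandingMatrix.
Variables (R : realType) (n : nat) (A : 'M[R]_n.+1).
Hypothesis A_exp : expanding A.
Local Notation normc := (@ComplexField.Normc.normc (R : rcfType)).
Local Notation Ac := (map_mx (real_complex (R : rcfType)) A).

Lemma expanding_unitmx : A \in unitmx.
Proof.
rewrite unitmxE unitfE; apply/negP => /eqP detA0.
have : eigenvalue Ac 0.
  rewrite eigenvalue_root_char rootE horner_coef0 char_poly_det det_map_mx.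
  by rewrite detA0 rmorph0 mulr0.
by move/A_exp; rewrite ComplexField.Normc.normc0 ltr10.
Qed.

Lemma expanding_invmx_eigenvalue z : eigenvalue (invmx Ac) z -> normc z < 1.
Proof.
move=> /eigenvalue_invmx; rewrite map_unitmx => /(_ expanding_unitmx) /A_exp.
rewrite ComplexField.Normc.normcV.
have [->|z0] := eqVneq (normc z) 0; first by rewrite invr0 ltr10.
by rewrite invf_gt1 // lt_neqAle eq_sym z0 normc_ge0.
Qed.

Lemma expanding_invmx_exp_cvg0 : `|invmx A ^+ k| @[k --> \oo] --> 0.
Proof.
apply: (squeeze_cvgr _ (cvg_cst 0)
  (mx_normc_exp_cvg0 1%:M expanding_invmx_eigenvalue)).
near=> k; rewrite normr_ge0 /= mulmx1 -map_invmx -rmorphXn.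
apply: mx_norm_le => [|i j]; first exact: mx_normc_ge0.
have := normc_le_mx_normc (map_mx (real_complex R) (invmx A ^+ k)) i j.
by rewrite mxE normc_real.
Unshelve. all: by end_near.
Qed.

End ExpandingMatrix.

Section ExpandingContraction.
Variables (R : realType) (n : nat) (N : 'cV[R]_n.+1 -> R) (A : 'M[R]_n.+1).
Hypotheses (N_norm : is_norm N) (A_exp : expanding A).
Let A_unit : A \is a GRing.unit := expanding_unitmx A_exp.

Lemma is_norm_mulmx_le :
  exists c, forall (M : 'M[R]_n.+1) x, N (M *m x) <= c * `|M| * N x.
Proof.
have [c _ x_le] := mx_norm_le_is_norm N_norm.
pose K := \sum_i N (delta_mx i 0 : 'cV[R]_n.+1).
have K_ge0 : 0 <= K by apply: sumr_ge0 => i _; apply: is_norm_ge0.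
exists (K * n.+1%:R * c) => M x.
rewrite (le_trans (is_norm_le_mx_norm N_norm _)) //.
have -> : K * n.+1%:R * c * `|M| * N x = K * (n.+1%:R * `|M| * (c * N x)) by ring.
by rewrite ler_wpM2l // (le_trans (mx_norm_mulmx_le M x)) // ler_wpM2l.
Qed.

Lemma expanding_contraction eta : 0 < eta ->
  \forall k \near \oo, forall x, N (invmx A ^+ k *m x) <= eta * N x.
Proof.
move=> eta_gt0; have [c N_mulmx] := is_norm_mulmx_le.
have : c * `|invmx A ^+ k| @[k --> \oo] --> 0.
  by rewrite -(mulr0 c); apply: cvgMl_tmp; apply: expanding_invmx_exp_cvg0.
move=> /cvgr_le /(_ eta eta_gt0); apply: filterS => k le_eta x.
by rewrite (le_trans (N_mulmx _ _)) // ler_wpM2r ?is_norm_ge0.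
Qed.

Lemma expanding_norm_cvgy x : x != 0 -> N (A ^+ k *m x) @[k --> \oo] --> +oo.
Proof.
move=> x0; apply/cvgryPge => M.
have Nx_gt0 := is_norm_gt0 N_norm x0.
have M1_gt0 : 0 < `|M| + 1 by rewrite ltr_pwDr ?normr_ge0.
have eta_gt0 : 0 < N x / (`|M| + 1) by rewrite divr_gt0.
apply: filterS (expanding_contraction eta_gt0) => k /(_ (A ^+ k *m x)).
rewrite mulmxA mulmxE exprVn mulVr ?unitrX // -idmxE mul1mx.
rewrite mulrAC ler_pdivlMr // ler_pM2l // => M1_le.
by rewrite (le_trans _ M1_le) // (le_trans (ler_norm M)) // lerDl.
Qed.

Lemma expanding_norm_cvg0 x : N (invmx A ^+ k *m x) @[k --> \oo] --> 0.
Proof.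
apply/cvgr0Pnorm_lt => e e_gt0.
have Nx1_gt0 : 0 < N x + 1 by rewrite ltr_pwDr ?is_norm_ge0.
have : 0 < e / (N x + 1) by rewrite divr_gt0.
move=> /expanding_contraction; apply: filterS => k /(_ x) le_e.
rewrite ger0_norm ?is_norm_ge0 // (le_lt_trans le_e) // mulrAC ltr_pdivrMr //.
by rewrite ltr_pM2l // ltrDl.
Qed.

Lemma expanding_norm_crossing x s : x != 0 -> 0 < s ->
  exists j, N (A ^ j *m x) <= s < N (A ^ (j + 1) *m x).
Proof.
move=> x_neq0 s_gt0.
move/cvgr_le: (expanding_norm_cvg0 x) => /(_ _ s_gt0) /filter_ex[k0 Nk0].
move/cvgryPgt: (expanding_norm_cvgy x_neq0) => /(_ s) /filter_ex[k1 Nk1].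
have k0_le_k1 : - k0%:Z <= k1%:Z by rewrite -subr_ge0 opprK addr_ge0.
have Nk0_le : N (A ^ (- k0%:Z) *m x) <= s by rewrite -exprnN -exprVn.
have Nk1_gt : ~~ (N (A ^ k1%:Z *m x) <= s) by rewrite -ltNge.
have [j /andP[Nj_le]] :=
  int_crossing (P := fun j => N (A ^ j *m x) <= s) k0_le_k1 Nk0_le Nk1_gt.
by rewrite -ltNge => Nj1_gt; exists j; rewrite Nj_le.
Qed.

End ExpandingContraction.

Section Profile.
Variables (R : realType) (r : R -> R).
Hypotheses (r_cont : {within `[0, +oo[, continuous r})
  (r_nonincr : forall s t, 0 <= s -> s <= t -> r t <= r s)
  (r0 : r 0 = 1) (r_cvgy : r s @[s --> +oo] --> 0).

Lemma profile_le1 s : 0 <= s -> r s <= 1.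
Proof. by move=> s_ge0; rewrite -r0 r_nonincr. Qed.

Lemma profile_ge0 s : 0 <= s -> 0 <= r s.
Proof.
move=> s_ge0; apply: (cvgr_to_le r_cvgy); near=> t; apply: r_nonincr => //.
Unshelve. all: by end_near.
Qed.

Lemma profile_near0 e : 0 < e -> exists2 d, 0 < d & forall s, 0 <= s < d -> 1 - e < r s.
Proof.
move=> e_gt0; have /continuous_within_itvcyP[_ /cvgrPdist_lt r_right] := r_cont.
have := r_right e e_gt0; rewrite near_withinE r0 => -[d /= d_gt0 r_d].
exists d => // s /andP[s_ge0 s_lt_d].
have [->|s_neq0] := eqVneq s 0; first by rewrite r0 gtrBl.
apply: ltr_distlBl; apply: r_d; first by rewrite /ball_ /= sub0r normrN ger0_norm.
by rewrite lt_def s_neq0.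
Qed.

Lemma profile_cvg1 (u : R^nat) : (forall k, 0 <= u k) -> u @ \oo --> 0 ->
  r (u k) @[k --> \oo] --> (1 : R).
Proof.
move=> u_ge0 u_cvg0; apply/cvgrPdist_lt => e e_gt0.
have [d d_gt0 r_d] := profile_near0 e_gt0.
move/cvgr0Pnorm_lt: u_cvg0 => /(_ d d_gt0); apply: filterS => k.
rewrite ger0_norm // => uk_lt_d.
rewrite ger0_norm ?subr_ge0 ?profile_le1 //.
by rewrite ltrBlDr -ltrBlDl r_d ?u_ge0.
Qed.

End Profile.

Lemma mxpowzE (R : realType) n (A : 'M[R]_n.+1) j : mxpowz A j = A ^ j.
Proof. by case: j => k //=; rewrite exprVn. Qed.

Section Proposition.
Variables (R : realType) (n : nat) (N : 'cV[R]_n.+1 -> R) (A : 'M[R]_n.+1).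
Variable r : R -> R.
Hypotheses (N_norm : is_norm N) (A_exp : expanding A).
Hypothesis N_le_NA : forall x, N x <= N (A *m x).
Hypotheses (r_cont : {within `[0, +oo[, continuous r})
  (r_nonincr : forall s t, 0 <= s -> s <= t -> r t <= r s)
  (r0 : r 0 = 1) (r_cvgy : r s @[s --> +oo] --> 0).

Let phi x := r (N x).
Let g x := phi x - phi (A *m x).
Let A_unit : A \is a GRing.unit := expanding_unitmx A_exp.

Lemma g_ge0 x : 0 <= g x.
Proof. by rewrite subr_ge0 r_nonincr ?is_norm_ge0. Qed.

Lemma g_le1 x : g x <= 1.
Proof.
have := profile_le1 r_nonincr r0 (is_norm_ge0 N_norm x).
have := profile_ge0 r_nonincr r_cvgy (is_norm_ge0 N_norm (A *m x)).
by rewrite /g /phi; lra.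
Qed.

Lemma g_exprz j x : g (A ^ j *m x) = phi (A ^ j *m x) - phi (A ^ (j + 1) *m x).
Proof. by rewrite /g mulmxA mulmxE [j + 1]addrC exprzDr // expr1z. Qed.

Lemma sum_g_exprz j x m : \sum_(i < m) g (A ^ (j + i%:Z) *m x) =
  phi (A ^ j *m x) - phi (A ^ (j + m%:Z) *m x).
Proof.
rewrite -(big_mkord xpredT (fun i => g (A ^ (j + i%:Z) *m x))).
rewrite (telescope_sumr_eq (fun i => - phi (A ^ (j + i%:Z) *m x)) _ (leq0n m)).
  by rewrite addr0 opprK addrC.
by move=> i _; rewrite g_exprz opprK addrC -addrA -PoszD addn1.
Qed.

Lemma series_g_pos x :
  series (fun k => g (A ^ k%:Z *m x)) = fun m => phi x - phi (A ^+ m *m x).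
Proof.
apply/funext => m; rewrite seriesEord /=.
under eq_bigr do rewrite -[X in A ^ X]add0r.
by rewrite sum_g_exprz add0r expr0z mul1mx.
Qed.

Lemma series_g_neg x :
  series (fun k => g (A ^ (Negz k) *m x)) = fun m => phi (invmx A ^+ m *m x) - phi x.
Proof.
apply/funext => m; rewrite seriesEnat /=.
rewrite (telescope_sumr_eq (fun i => phi (invmx A ^+ i *m x)) _ (leq0n m)).
  by rewrite expr0 mul1mx.
move=> k _; have NegzS : Negz k + 1 = - k%:Z by rewrite NegzE -addn1 PoszD opprD subrK.
by rewrite g_exprz NegzS NegzE -!exprnN -!exprVn.
Qed.

Lemma zsum_g x : x != 0 -> zsum_to (fun j => g (A ^ j *m x)) 1.
Proof.
move=> x_neq0; exists (phi x), (1 - phi x); split; last by rewrite addrC subrK.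
  rewrite series_g_pos -[X in _ --> X]subr0; apply: cvgB; first exact: cvg_cst.
  exact: cvg_comp (expanding_norm_cvgy N_norm A_exp x_neq0) r_cvgy.
rewrite series_g_neg; apply: cvgB; last exact: cvg_cst.
apply: profile_cvg1 => //; first by move=> k; apply: is_norm_ge0.
exact: expanding_norm_cvg0.
Qed.

Lemma g_sqr_lower_bound :
  exists2 c, 0 < c & forall x, x != 0 -> exists j, c <= g (A ^ j *m x) ^+ 2.
Proof.
have quarter_gt0 : 0 < 1 / 4 :> R by [].
have [d d_gt0 r_near0] := profile_near0 r_cont r0 quarter_gt0.
pose s1 := d / 2; have s1_gt0 : 0 < s1 by rewrite divr_gt0.
move/cvgr_lt: (r_cvgy) => /(_ _ quarter_gt0) [M [_ r_neary]].
pose s0 := `|M| + 1; have s0_gt0 : 0 < s0 by rewrite ltr_pwDr ?normr_ge0.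
have [K _ contr] := expanding_contraction N_norm A_exp (divr_gt0 s1_gt0 s0_gt0).
pose L := K.+1; pose c := (2 * L%:R)^-1 : R.
have c_gt0 : 0 < c by rewrite invr_gt0 mulr_gt0.
exists (c ^+ 2) => [|x x_neq0]; first by rewrite exprn_gt0.
have [j /andP[Nj_le Nj1_gt]] := expanding_norm_crossing N_norm A_exp x_neq0 s1_gt0.
have s0_le : s0 <= N (A ^ (j + L%:Z) *m x).
  have := contr K (leqnn K) (A ^ (j + L%:Z) *m x).
  have -> : invmx A ^+ K *m (A ^ (j + L%:Z) *m x) = A ^ (j + 1) *m x.
    rewrite mulmxA mulmxE exprVn exprnN -exprzDr //; congr (A ^ _ *m x).
    by rewrite addrCA /L -addn1 PoszD addKr.
  move=> le_contr; rewrite leNgt; apply/negP => lt_s0.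
  have : s1 / s0 * N (A ^ (j + L%:Z) *m x) < s1 / s0 * s0 by rewrite ltr_pM2l ?divr_gt0.
  by rewrite divfK ?gt_eqF //; lra.
have window : c *+ L < \sum_(i < L) g (A ^ (j + i%:Z) *m x).
  have -> : c *+ L = 1 / 2 by rewrite /c -mulr_natr; field; rewrite pnatr_eq0.
  have /r_near0 : 0 <= N (A ^ j *m x) < d.
    by rewrite is_norm_ge0 // (le_lt_trans Nj_le) // ltr_pdivrMr // ltr_pMr // ltr1n.
  have /r_neary : M < N (A ^ (j + L%:Z) *m x).
    by rewrite (le_lt_trans (ler_norm M)) // (lt_le_trans _ s0_le) // ltrDl.
  by rewrite sum_g_exprz /phi; lra.
have [i c_lt_g] := sum_ord_gt_exists window.
by exists (j + i%:Z); rewrite !expr2 ler_pM // ltW.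
Qed.

Lemma proposition2p4_dim_succ :
  [/\ (forall x, 0 <= g x),
      (forall x, x != 0 -> zsum_to (fun j => g (mxpowz A j *m x)) 1)
    & exists2 C, 0 < C & forall x, x != 0 -> exists S,
        zsum_to (fun j => `|g (mxpowz A j *m x)| ^+ 2) S /\ C <= S <= 1].
Proof.
have g01 x : 0 <= g x <= 1 by rewrite g_ge0 g_le1.
split=> [|x x_neq0|]; first exact: g_ge0.
  by under eq_fun do rewrite mxpowzE; apply: zsum_g.
have [C C_gt0 C_le] := g_sqr_lower_bound; exists C => // x x_neq0.
have [S zS S_le1] := zsum_to_sqr_le (fun j => g01 _) (zsum_g x_neq0).
exists S; split.
  move: zS; congr zsum_to; apply/funext => j.
  by rewrite mxpowzE ger0_norm ?g_ge0.
have [j C_le_gj] := C_le x x_neq0.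
apply/andP; split => //; rewrite (le_trans C_le_gj) // (zsum_to_term_le _ zS) // => i.
exact: sqr_ge0.
Qed.

End Proposition.

Theorem proposition2p4 (R : realType) (d : nat) (N : 'cV[R]_d -> R)
    (A : 'M[R]_d) (r : R -> R) :
  is_norm N ->
  expanding A ->
  (forall x : 'cV[R]_d, N x <= N (A *m x)) ->
  {within `[0, +oo[, continuous r} ->
  (forall s t : R, 0 <= s -> s <= t -> r t <= r s) ->
  r 0 = 1 ->
  r s @[s --> +oo] --> 0 ->
  let phi := fun x : 'cV[R]_d => r (N x) in
  let g := fun x : 'cV[R]_d => phi x - phi (A *m x) in
  [/\ (forall x : 'cV[R]_d, 0 <= g x),
      (forall x : 'cV[R]_d, x != 0 ->
         zsum_to (fun j : int => g (mxpowz A j *m x)) 1)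
    & exists2 C : R, 0 < C &
        forall x : 'cV[R]_d, x != 0 ->
          exists S : R,
            zsum_to (fun j : int => `|g (mxpowz A j *m x)| ^+ 2) S
            /\ C <= S <= 1].
Proof.
case: d N A => [|n] N A N_norm A_exp N_le_NA r_cont r_nonincr r0 r_cvgy phi g.
  split=> [x|x|]; rewrite ?[x]flatmx0 ?eqxx //; first by rewrite /g mulmx0 subrr.
  by exists 1 => // x; rewrite [x]flatmx0 eqxx.
exact: proposition2p4_dim_succ.
Qed.
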